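(* Consider a CoMP BC under the finite-field model over $\mathbb F_q$ with connectivity matrix $\mathbf M\in\{0,*\}^{K\times B}$. Then for every prime power $q$, the NS-assisted sum-capacity satisfies $$\frac{C_\Sigma^{\mathrm{NS}}(q)}{\log_2 q}\le \operatorname{minrk}_q(\mathbf M),$$ and consequently the NS-assisted sum-DoF satisfies $d_\Sigma^{\mathrm{NS}}\le\liminf_{q\to\infty}\operatorname{minrk}_q(\mathbf M)$ (limit along prime powers).
   Context: CoMP BC, finite-field model: $B$ transmit antennas, $K$ receivers, connectivity $\mathbf M\in\{0,*\}^{K\times B}$. At use $\tau$ the transmitter sends $X^{(\tau)}\in\mathbb F_q^B$ and Rx-$k$ observes $(Y_k^{(\tau)},(G_{kj}^{(\tau)})_j)$, $Y_k^{(\tau)}=\sum_jG_{kj}^{(\tau)}X_j^{(\tau)}$; coefficients mutually independent over $k,j,\tau$ and of the messages, uniform on $\mathbb F_q^\times$ if $M_{kj}=*$, else $0$. Messages $W_k$ independent, uniform on finite $\mathcal M_k$. A $\kappa$-partite NS box is a conditional pmf of outputs given inputs (finite output alphabets) whose output marginals for any subset of parties depend only on those parties' inputs. An NS-assisted scheme is a $(K+1)$-partite NS box where the transmitter inputs $(W_1,\dots,W_K)$ and obtains the channel input sequence, and Rx-$k$ inputs its channel output sequence and obtains $\hat W_k$; joint law = uniform message pmf $\times$ box $\times$ channel. Rates are achievable if some sequence of schemes has vanishing $\max_k\Pr(\hat W_k\ne W_k)$ and $\lim\frac1n\log_2|\mathcal M_k|\ge R_k$; $C_\Sigma^{\mathrm{NS}}(q)$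 is the maximal sum of achievable rates (over the closure). A DoF tuple is achievable if for each prime power $q$ some NS-achievable rate tuple has $\lim_q R_k(q)/\log_2q\ge d_k$; $d_\Sigma^{\mathrm{NS}}$ is the maximal sum over the closure of such tuples. Min-rank: $\operatorname{minrk}_q(\mathbf M)=\min\{\mathrm{rank}(\overline{\mathbf G}):\overline{\mathbf G}\in\mathbb F_q^{K\times B},\ \overline G_{ij}=0\iff M_{ij}=0\}$. *)

From HB Require Import structures.
From mathcomp Require Import all_boot all_order all_algebra all_field.
From mathcomp Require Import all_classical all_reals all_analysis.
From mathcomp Require Import Rstruct Rstruct_topology.

Set Implicit Arguments.
Unset Strict Implicit.
Unset Printing Implicit Defensive.

Import Order.TTheory GRing.Theory Num.Theory.
Local Open Scope classical_set_scope.
Local Open Scope ring_scope.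

Notation Rr := Rdefinitions.R.

Definition log2 (x : Rr) : Rr := ln x / ln 2.

Definition prime_power (q : nat) : Prop :=
  exists p k : nat, prime p /\ (0 < k)%N /\ q = (p ^ k)%N.

(* Connectivity matrix: true stands for '*', false for '0'. *)
Definition fits (F : finFieldType) (K B : nat) (M : 'M[bool]_(K, B))
  (G : 'M[F]_(K, B)) : bool :=
  [forall i, forall j, (G i j == 0) == ~~ M i j].

Definition minrk (F : finFieldType) (K B : nat) (M : 'M[bool]_(K, B)) : nat :=
  \big[minn/K]_(G : 'M[F]_(K, B) | fits M G) \rank G.

Section Model.
Variables (F : finFieldType) (K B : nat) (M : 'M[bool]_(K, B)).

Definition Xseq (n : nat) := {ffun 'I_n -> {ffun 'I_B -> F}}.
Definition Gseq (n : nat) := {ffun 'I_n -> 'M[F]_(K, B)}.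
(* observation sequence of one receiver: (Y_k^(t), (G_kj^(t))_j)_t *)
Definition Obs (n : nat) := {ffun 'I_n -> (F * {ffun 'I_B -> F})%type}.
Definition Msg (m : 'I_K -> nat) := {dffun forall k : 'I_K, 'I_(m k)}.

Definition coef_pmf (b : bool) (c : F) : Rr :=
  if b then (if c != 0 then (#|F|%:R - 1)^-1 else 0)
  else (if c == 0 then 1 else 0).

Definition G_pmf (n : nat) (g : Gseq n) : Rr :=
  \prod_(t < n) \prod_(k < K) \prod_(j < B) coef_pmf (M k j) (g t k j).

Definition obs (n : nat) (g : Gseq n) (x : Xseq n) : {ffun 'I_K -> Obs n} :=
  [ffun k => [ffun t => (\sum_(j < B) g t k j * x t j, [ffun j => g t k j])]].

(* A (K+1)-partite box: transmitter inputs w, Rx-k inputs o k;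
   transmitter outputs x, Rx-k outputs wh k.  N w o x wh = P(x, wh | w, o). *)
Definition box (n : nat) (m : 'I_K -> nat) :=
  Msg m -> {ffun 'I_K -> Obs n} -> Xseq n -> Msg m -> Rr.

(* Non-signaling: for every subset of parties T = ({Tx if t} u S), the
   marginal of the outputs of T depends only on the inputs of T. *)
Definition ns_box (n : nat) (m : 'I_K -> nat) (N : box n m) : Prop :=
  [/\ (forall w o x wh, 0 <= N w o x wh),
      (forall w o, \sum_(x : Xseq n) \sum_(wh : Msg m) N w o x wh = 1) &
      (forall (t : bool) (S : {set 'I_K}) (w w' : Msg m)
              (o o' : {ffun 'I_K -> Obs n}),
          (t -> w = w') -> (forall k, k \in S -> o k = o' k) ->
          forall (x : Xseq n) (wh : Msg m),
            \sum_(x' : Xseq n | t ==> (x' == x))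
              \sum_(wh' : Msg m | [forall k in S, wh' k == wh k]) N w o x' wh'
            = \sum_(x' : Xseq n | t ==> (x' == x))
              \sum_(wh' : Msg m | [forall k in S, wh' k == wh k]) N w' o' x' wh')].

(* Pr(Wh_k <> W_k) under the joint law
   uniform message pmf x box x channel *)
Definition err_prob (n : nat) (m : 'I_K -> nat) (N : box n m) (k : 'I_K) : Rr :=
  \sum_(w : Msg m) \sum_(g : Gseq n) \sum_(x : Xseq n)
    \sum_(wh : Msg m | wh k != w k)
      (\prod_(i < K) (m i)%:R)^-1 * G_pmf g * N w (obs g x) x wh.

Definition seq_lim (u : nat -> Rr) (L : Rr) : Prop :=
  forall eps : Rr, 0 < eps -> exists i0 : nat, forall i : nat, (i0 <= i)%N ->
    `|u i - L| < eps.

Definition ns_achievable (r : 'I_K -> Rr) : Prop :=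
  exists (n : nat -> nat) (m : nat -> 'I_K -> nat)
         (N : forall i : nat, box (n i) (m i)),
    [/\ (forall i, 0 < n i)%N,
        (forall i k, 0 < m i k)%N,
        (forall i, ns_box (N i)),
        seq_lim (fun i => \big[Num.max/0]_(k < K) err_prob (N i) k) 0 &
        (forall k, exists L, seq_lim (fun i => log2 (m i k)%:R / (n i)%:R) L
                             /\ r k <= L)].

End Model.

Definition tclosure (K : nat) (A : set ('I_K -> Rr)) : set ('I_K -> Rr) :=
  [set r | forall eps : Rr, 0 < eps ->
     exists r', A r' /\ forall k, `|r k - r' k| < eps].

Definition sum_capacity_NS (F : finFieldType) (K B : nat) (M : 'M[bool]_(K, B))
  : \bar Rr :=
  ereal_sup [set (\sum_(k < K) r k)%:E | r in tclosure (ns_achievable F M)].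

Definition pp_lim (f : nat -> Rr) (L : Rr) : Prop :=
  forall eps : Rr, 0 < eps -> exists Q : nat, forall q : nat,
    (Q <= q)%N -> prime_power q -> `|f q - L| < eps.

(* Fq q is the field with q elements (for prime powers q) *)
Definition dof_achievable (Fq : nat -> finFieldType) (K B : nat)
  (M : 'M[bool]_(K, B)) (d : 'I_K -> Rr) : Prop :=
  exists Rq : nat -> 'I_K -> Rr,
    (forall q, prime_power q -> ns_achievable (Fq q) M (Rq q)) /\
    (forall k, exists L, pp_lim (fun q => Rq q k / log2 q%:R) L /\ d k <= L).

Definition sum_dof_NS (Fq : nat -> finFieldType) (K B : nat)
  (M : 'M[bool]_(K, B)) : \bar Rr :=
  ereal_sup [set (\sum_(k < K) d k)%:E | d in tclosure (dof_achievable Fq M)].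

Definition pp_liminf (f : nat -> Rr) : \bar Rr :=
  ereal_sup [set ereal_inf [set (f q)%:E | q in [set q | (Q <= q)%N /\ prime_power q]]
            | Q in [set: nat]].

(* Fix [Gb] fitting [M] with [\rank Gb = minrk M].  By non-signaling, the
   probability that receiver k decodes correctly depends on the coefficients
   only through row k, so for each k a measure-preserving change of variables
   ([swap_rows]) replaces row k by the corresponding row of [Gb * diag c],
   with one vector c shared by all receivers.  All outputs are then functions
   of [row_base Gb * diag c * X], i.e. of r n symbols of F with r = minrk M,
   and non-signaling bounds the probability that every receiver decodes
   correctly by q^(r n) / |W|.  A union bound turns this into
   [1 - q^(r n) / |W| <= \sum_k Pr(error_k)], hence
   [\sum_k log2 |W_k| <= r n log2 q + O(error)]; limits and closures give
   both bounds. *)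

From HB Require Import structures.
From mathcomp Require Import all_boot all_order all_algebra all_field all_fingroup.
From mathcomp Require Import all_classical all_reals all_analysis.
From mathcomp Require Import Rstruct Rstruct_topology.
From mathcomp Require Import ring lra.

Set Implicit Arguments.
Unset Strict Implicit.
Unset Printing Implicit Defensive.

Import Order.TTheory GRing.Theory Num.Theory.
Local Open Scope ring_scope.

Section CoefficientLaw.
Variables (F : finFieldType) (K B : nat) (M : 'M[bool]_(K, B)).

Lemma coef_pmf_ge0 b (c : F) : 0 <= coef_pmf b c.
Proof.
rewrite /coef_pmf; case: b; case: ifP => // _.
by rewrite invr_ge0 subr_ge0 ler1n ltnW // card_finNzRing_gt1.
Qed.

Lemma sum_coef_pmf b : \sum_(c : F) coef_pmf b c = 1.
Proof.
rewrite /coef_pmf (bigD1 0) //= eqxx; case: b.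
  under eq_bigr => c /negPf c_neq0 do rewrite c_neq0.
  have F_gt1 := card_finNzRing_gt1 F.
  rewrite add0r sumr_const (_ : #|_| = #|F|.-1); last by rewrite -(cardC1 (0 : F)).
  rewrite -subn1 -[_ *+ _]mulr_natr natrB ?(ltnW F_gt1) //.
  by rewrite mulVf // subr_eq0 pnatr_eq1 gtn_eqF.
by rewrite big1 ?addr0 // => c /negPf ->.
Qed.

Lemma coef_pmfZ b (s c : F) : s != 0 -> coef_pmf b (s * c) = coef_pmf b c.
Proof. by move=> s_neq0; rewrite /coef_pmf mulf_eq0 (negPf s_neq0). Qed.

Lemma sum_mx_prod (h : 'I_K -> 'I_B -> F -> Rr) :
  \sum_(A : 'M[F]_(K, B)) \prod_i \prod_j h i j (A i j) =
  \prod_i \prod_j \sum_c h i j c.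
Proof.
under [RHS]eq_bigr => i _ do rewrite bigA_distr_bigA /=.
rewrite bigA_distr_bigA /=.
rewrite (reindex (fun A : 'M[F]_(K, B) => [ffun i => [ffun j => A i j]])) /=.
  by apply: eq_bigr => A _; do 2![apply: eq_bigr => ? _]; rewrite !ffunE.
exists (fun f : {ffun 'I_K -> {ffun 'I_B -> F}} => \matrix_(i, j) f i j).
  by move=> A _; apply/matrixP => i j; rewrite mxE !ffunE.
by move=> f _; apply/ffunP => i; apply/ffunP => j; rewrite !ffunE mxE.
Qed.

Variable n : nat.
Implicit Type g : Gseq F K B n.

Lemma G_pmf_ge0 g : 0 <= G_pmf M g.
Proof. by do 3![apply: prodr_ge0 => ? _]; exact: coef_pmf_ge0. Qed.

Lemma sum_G_pmf : \sum_(g : Gseq F K B n) G_pmf M g = 1.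
Proof.
rewrite /G_pmf -(bigA_distr_bigA (fun t (A : 'M[F]_(K, B)) =>
  \prod_(i < K) \prod_(j < B) coef_pmf (M i j) (A i j))) /=.
rewrite big1 // => t _; rewrite (sum_mx_prod (fun i j => coef_pmf (M i j))).
by do 2![rewrite big1 // => ? _]; exact: sum_coef_pmf.
Qed.

Lemma G_pmf_support g t i j : G_pmf M g != 0 -> ~~ M i j -> g t i j = 0.
Proof.
move=> g_neq0 Mij_false; apply/eqP; apply: contraNT g_neq0 => gtij_neq0.
rewrite /G_pmf (bigD1 t) //= (bigD1 i) //= (bigD1 j) //=.
by rewrite /coef_pmf (negPf Mij_false) (negPf gtij_neq0) !mul0r.
Qed.

End CoefficientLaw.

Section NonSignaling.
Variables (F : finFieldType) (K B n : nat) (m : 'I_K -> nat).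
Variables (N : box F B n m) (NS : ns_box N).
Implicit Types (w wh : Msg m) (o : {ffun 'I_K -> Obs F B n}) (x : Xseq F B n).

Lemma ns_box_ge0 w o x wh : 0 <= N w o x wh.
Proof. by case: NS. Qed.

Lemma ns_box_sum1 w o : \sum_x \sum_wh N w o x wh = 1.
Proof. by case: NS. Qed.

Lemma ns_box_tx_marginal w o o' x :
  \sum_wh N w o x wh = \sum_wh N w o' x wh.
Proof.
case: (pickP (@predT (Msg m))) => [wh0 _|no_msg]; last by rewrite !big_pred0.
have no_rx k : k \in finset.set0 -> o k = o' k by rewrite inE.
have [_ _ /(_ true finset.set0 w w o o' (fun _ => erefl) no_rx x wh0)] := NS.
rewrite /= !big_pred1_eq.
have all_set0 wh : [forall k in finset.set0, wh k == wh0 k].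
  by apply/forall_inP => k; rewrite inE.
by rewrite !(eq_bigl _ _ all_set0).
Qed.

Lemma ns_box_rx_marginal w w' o wh :
  \sum_x N w o x wh = \sum_x N w' o x wh.
Proof.
have no_tx : false -> w = w' by case.
have [_ _ /(_ false [set: 'I_K] w w' o o no_tx (fun _ _ => erefl) 0 wh)] := NS.
have all_setT wh' : [forall k in [set: 'I_K], wh' k == wh k] = (wh' == wh).
  apply/forall_inP/eqP => [eq_wh|-> //]; apply/ffunP => k.
  by apply/eqP; apply: eq_wh; rewrite inE.
under eq_bigr => ? _ do rewrite (eq_bigl _ _ all_setT) big_pred1_eq.
by under [in RHS]eq_bigr => ? _ do rewrite (eq_bigl _ _ all_setT) big_pred1_eq.
Qed.

Lemma ns_box_rx1_marginal k w o o' x : o k = o' k ->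
  \sum_(wh : Msg m | wh k == w k) N w o x wh =
  \sum_(wh : Msg m | wh k == w k) N w o' x wh.
Proof.
move=> eq_ok.
have eq_o k' : k' \in [set k] -> o k' = o' k' by rewrite inE => /eqP ->.
have [_ _ /(_ true [set k] w w o o' (fun _ => erefl) eq_o x w)] := NS.
have only_k wh : [forall k' in [set k], wh k' == w k'] = (wh k == w k).
  apply/forall_inP/idP => [|eq_k k']; first by apply; rewrite inE.
  by rewrite inE => /eqP ->.
by rewrite /= !big_pred1_eq !(eq_bigl _ _ only_k).
Qed.

Lemma ns_box_sum1_feedback w (f : Xseq F B n -> {ffun 'I_K -> Obs F B n}) :
  \sum_x \sum_wh N w (f x) x wh = 1.
Proof.
rewrite -(ns_box_sum1 w (f 0)).
by apply: eq_bigr => x _; apply: ns_box_tx_marginal.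
Qed.

Lemma ns_box_guess_le1 o : \sum_w \sum_x N w o x w <= 1.
Proof.
case: (pickP (@predT (Msg m))) => [w0 _|no_msg]; last by rewrite big_pred0.
under eq_bigr => w _ do rewrite (ns_box_rx_marginal w w0).
by rewrite exchange_big ns_box_sum1.
Qed.

Lemma ns_box_guess_le (T : finType) (y : Xseq F B n -> T)
    (out : T -> {ffun 'I_K -> Obs F B n}) :
  \sum_w \sum_x N w (out (y x)) x w <= #|T|%:R.
Proof.
apply: (@le_trans _ _ (\sum_w \sum_(t : T) \sum_x N w (out t) x w)).
  apply: ler_sum => w _; rewrite (partition_big y predT) //=.
  apply: ler_sum => t _; rewrite [leRHS](bigID (fun x => y x == t)) /=.
  under eq_bigr => x /eqP -> do [].
  by rewrite lerDl; apply: sumr_ge0 => x _; apply: ns_box_ge0.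
rewrite exchange_big -sum1_card natr_sum /=.
by apply: ler_sum => t _; apply: ns_box_guess_le1.
Qed.

End NonSignaling.

Section Alignment.
Variables (F : finFieldType) (K B : nat) (M : 'M[bool]_(K, B)).
Variables (Gb : 'M[F]_(K, B)) (Gb_fits : fits M Gb) (n : nat).
Implicit Type g : Gseq F K B n.

Lemma fits_neq0 i j : (Gb i j != 0) = M i j.
Proof. by move: Gb_fits => /forallP /(_ i) /forallP /(_ j) /eqP ->; rewrite negbK. Qed.

Definition pivot j : option 'I_K := [pick i | M i j].

Lemma pivotP j k : M k j -> exists2 p, pivot j = Some p & M p j.
Proof. by rewrite /pivot; case: pickP => [p Mpj|/(_ k) ->] // _; exists p. Qed.

Definition gain g t j : F :=
  if pivot j is Some p then g t p j / Gb p j else 0.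

Definition align g : Gseq F K B n :=
  [ffun t => \matrix_(i, j) (Gb i j * gain g t j)].

(* In every column [j] with [M k j], exchange the entries of rows [k] and
   [pivot j], rescaled by the ratio of the entries of [Gb]: row [k] becomes
   row [k] of [align g], and the law of the coefficients is unchanged since
   both entries are uniform on the units of [F]. *)
Definition swap_rows k g : Gseq F K B n :=
  [ffun t => \matrix_(i, j)
     if (M k j, pivot j) is (true, Some p) then
       if i == k then Gb k j / Gb p j * g t p j
       else if i == p then Gb p j / Gb k j * g t k j
       else g t i j
     else g t i j].

Lemma swap_rowsK k : involutive (swap_rows k).
Proof.
move=> g; apply/ffunP => t; apply/matrixP => i j; rewrite !(ffunE, mxE).
case Mkj: (M k j) => //; have [p pivot_j Mpj] := pivotP Mkj.
have Gkj : Gb k j != 0 by rewrite fits_neq0.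
have Gpj : Gb p j != 0 by rewrite fits_neq0.
have cancel_ratio (a b x : F) : a != 0 -> b != 0 -> a / b * (b / a * x) = x.
  by move=> a_neq0 b_neq0; field; rewrite a_neq0 b_neq0.
rewrite pivot_j !mxE Mkj pivot_j !eqxx; case: (i =P k) => [->|ik].
  by case: (p =P k) => [->|_]; rewrite cancel_ratio.
by case: (i =P p) => [->|] //; rewrite cancel_ratio.
Qed.

Lemma G_pmf_swap_rows k g : G_pmf M (swap_rows k g) = G_pmf M g.
Proof.
apply: eq_bigr => t _; rewrite exchange_big [RHS]exchange_big.
apply: eq_bigr => j _ /=; rewrite ffunE; under eq_bigr => i _ do rewrite mxE.
case Mkj: (M k j) => //; have [p -> Mpj] := pivotP Mkj.
have ratio_neq0 a b : Gb a j != 0 -> Gb b j != 0 -> Gb a j / Gb b j != 0.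
  by move=> a_neq0 b_neq0; rewrite mulf_neq0 ?invr_eq0.
have Gkj : Gb k j != 0 by rewrite fits_neq0.
have Gpj : Gb p j != 0 by rewrite fits_neq0.
rewrite [RHS](reindex_inj (@perm_inj _ (tperm k p))) /=.
apply: eq_bigr => i _; case: tpermP => [->|->|/eqP/negPf-> /eqP/negPf->] //.
  by rewrite eqxx coef_pmfZ ?ratio_neq0 // Mkj Mpj.
case: (p =P k) => [->|_]; first by rewrite coef_pmfZ ?ratio_neq0.
by rewrite eqxx coef_pmfZ ?ratio_neq0 // Mkj Mpj.
Qed.

Lemma swap_rows_row k g t j :
  G_pmf M g != 0 -> swap_rows k g t k j = align g t k j.
Proof.
move=> g_neq0; rewrite !ffunE !mxE /gain.
case Mkj: (M k j).
  by have [p -> _] := pivotP Mkj; rewrite eqxx; ring.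
have /eqP -> : Gb k j == 0 by rewrite -[_ == _]negbK fits_neq0 Mkj.
by rewrite mul0r (G_pmf_support t g_neq0) ?Mkj.
Qed.

End Alignment.

Lemma card_Msg K (m : 'I_K -> nat) : #|Msg m| = (\prod_(k < K) m k)%N.
Proof.
by rewrite card_dep_ffun foldrE big_image; apply: eq_bigr => k _; rewrite card_ord.
Qed.

Lemma sum_eq_component_le K (m : 'I_K -> nat) (wh w : Msg m) :
  \sum_(k < K) ((wh k == w k)%:R : Rr) <= K%:R - 1 + (wh == w)%:R.
Proof.
have [->|wh_neq_w] := eqVneq wh w.
  by under eq_bigr => k _ do rewrite eqxx; rewrite sumr_const card_ord subrK.
have [k wh_k_neq|all_eq] := pickP (fun k => wh k != w k); last first.
  by case/eqP: wh_neq_w; apply/ffunP => k; apply/eqP/negbFE/all_eq.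
rewrite addr0 (bigD1 k) //= (negPf wh_k_neq) add0r.
have -> : K%:R - 1 = \sum_(i < K | i != k) (1 : Rr).
  by rewrite -[in LHS](card_ord K) -sum1_card natr_sum (bigD1 k) //= addrAC subrr add0r.
by apply: ler_sum => i _; case: (_ == _).
Qed.

Section ConverseBound.
Variables (F : finFieldType) (K B : nat) (M : 'M[bool]_(K, B)).
Variables (Gb : 'M[F]_(K, B)) (Gb_fits : fits M Gb).
Variables (n : nat) (m : 'I_K -> nat) (N : box F B n m) (NS : ns_box N).
Implicit Types (g : Gseq F K B n) (w : Msg m) (x : Xseq F B n).

Definition correct_mass k w g :=
  \sum_x \sum_(wh : Msg m | wh k == w k) N w (obs g x) x wh.

Lemma correct_mass_row k w g g' : (forall t j, g t k j = g' t k j) ->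
  correct_mass k w g = correct_mass k w g'.
Proof.
move=> eq_row; apply: eq_bigr => x _; apply: ns_box_rx1_marginal => //.
rewrite /obs !ffunE; apply/ffunP => t; rewrite !ffunE; congr pair.
  by apply: eq_bigr => j _; rewrite eq_row.
by apply/ffunP => j; rewrite !ffunE eq_row.
Qed.

Lemma avg_correct_mass_align k w :
  \sum_g G_pmf M g * correct_mass k w g =
  \sum_g G_pmf M g * correct_mass k w (align M Gb g).
Proof.
rewrite (reindex_inj (can_inj (swap_rowsK Gb_fits k))) /=.
apply: eq_bigr => g _; rewrite G_pmf_swap_rows //.
have [->|g_neq0] := eqVneq (G_pmf M g) 0; first by rewrite !mul0r.
by congr (_ * _); apply: correct_mass_row => t j; apply: swap_rows_row.
Qed.

Definition compress g x : {ffun 'I_n -> {ffun 'I_(\rank Gb) -> F}} :=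
  [ffun t => [ffun l => \sum_j row_base Gb l j * (gain M Gb g t j * x t j)]].

Definition expand g (y : {ffun 'I_n -> {ffun 'I_(\rank Gb) -> F}}) :
    {ffun 'I_K -> Obs F B n} :=
  [ffun k => [ffun t =>
    (\sum_l col_base Gb k l * y t l, [ffun j => align M Gb g t k j])]].

Lemma obs_align g x : obs (align M Gb g) x = expand g (compress g x).
Proof.
apply/ffunP => k; rewrite !ffunE; apply/ffunP => t; rewrite !ffunE; congr pair.
transitivity (\sum_j \sum_l col_base Gb k l *
                (row_base Gb l j * (gain M Gb g t j * x t j))).
  apply: eq_bigr => j _; rewrite mxE -{1}(mulmx_base Gb) mxE !big_distrl /=.
  by apply: eq_bigr => l _; rewrite !mulrA.
by rewrite exchange_big; apply: eq_bigr => l _; rewrite !ffunE big_distrr.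
Qed.

Lemma all_correct_align_le g :
  \sum_w \sum_x N w (obs (align M Gb g) x) x w <= (#|F| ^ (\rank Gb * n))%:R.
Proof.
under eq_bigr => w _ do under eq_bigr => x _ do rewrite obs_align.
apply: le_trans (ns_box_guess_le NS (compress g) (expand g)) _.
by rewrite !card_ffun !card_ord -expnM mulnC.
Qed.

Lemma sum_correct_mass_le w g :
  \sum_k correct_mass k w g <= K%:R - 1 + \sum_x N w (obs g x) x w.
Proof.
have -> : \sum_k correct_mass k w g = \sum_x \sum_(wh : Msg m)
    (\sum_k ((wh k == w k)%:R : Rr)) * N w (obs g x) x wh.
  rewrite exchange_big; apply: eq_bigr => x _.
  under eq_bigr => k _ do rewrite big_mkcond /=.
  rewrite exchange_big; apply: eq_bigr => wh _; rewrite big_distrl /=.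
  by apply: eq_bigr => k _; case: (_ == _); rewrite ?mul1r ?mul0r.
apply: le_trans (_ : \sum_x \sum_(wh : Msg m)
    (K%:R - 1 + (wh == w)%:R) * N w (obs g x) x wh <= _).
  do 2![apply: ler_sum => ? _]; apply: ler_wpM2r; first exact: ns_box_ge0.
  exact: sum_eq_component_le.
have mass_w x : \sum_(wh : Msg m) (wh == w)%:R * N w (obs g x) x wh = N w (obs g x) x w.
  by rewrite (bigD1 w) //= eqxx mul1r big1 ?addr0 // => wh /negPf ->; rewrite mul0r.
under eq_bigr => x _ do
  rewrite (eq_bigr _ (fun wh _ => mulrDl _ _ _)) big_split /= mass_w -big_distrr /=.
by rewrite big_split /= -big_distrr /= ns_box_sum1_feedback // mulr1.
Qed.

Lemma error_mass k w g :
  \sum_x \sum_(wh : Msg m | wh k != w k) N w (obs g x) x wh = 1 - correct_mass k w g.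
Proof.
rewrite -(ns_box_sum1_feedback NS w (obs g)) -sumrB; apply: eq_bigr => x _.
by rewrite [in RHS](bigID (fun wh : Msg m => wh k == w k)) /= addrC addrK.
Qed.

Hypothesis m_gt0 : forall k, (0 < m k)%N.

Lemma card_Msg_neq0 : #|Msg m|%:R != 0 :> Rr.
Proof. by rewrite pnatr_eq0 card_Msg -lt0n prodn_gt0. Qed.

Lemma err_prob_correct_mass k :
  err_prob M N k =
  1 - (#|Msg m|%:R)^-1 * \sum_w \sum_g G_pmf M g * correct_mass k w g.
Proof.
rewrite /err_prob -natr_prod -card_Msg; set c := (#|Msg m|%:R)^-1.
transitivity (\sum_w \sum_g (c * G_pmf M g - c * (G_pmf M g * correct_mass k w g))).
  apply: eq_bigr => w _; apply: eq_bigr => g _.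
  under eq_bigr => x _ do rewrite -big_distrr /=.
  by rewrite -big_distrr /= error_mass mulrBr mulr1 mulrA.
under eq_bigr => w _ do rewrite sumrB -!big_distrr /= sum_G_pmf mulr1.
by rewrite sumrB -big_distrr sumr_const -mulr_natr mulVf // card_Msg_neq0.
Qed.

Lemma sum_avg_correct_mass_le :
  \sum_k \sum_w \sum_g G_pmf M g * correct_mass k w g <=
  (K%:R - 1) * #|Msg m|%:R + (#|F| ^ (\rank Gb * n))%:R.
Proof.
under eq_bigr => k _ do under eq_bigr => w _ do rewrite avg_correct_mass_align.
rewrite exchange_big /=.
apply: le_trans (_ : \sum_w \sum_g G_pmf M g *
    (K%:R - 1 + \sum_x N w (obs (align M Gb g) x) x w) <= _).
  apply: ler_sum => w _; rewrite exchange_big /=; apply: ler_sum => g _.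
  rewrite -big_distrr /=; apply: ler_wpM2l; first exact: G_pmf_ge0.
  exact: sum_correct_mass_le.
under eq_bigr => w _ do rewrite (eq_bigr _ (fun g _ => mulrDr _ _ _)) big_split /=
  -big_distrl /= sum_G_pmf mul1r.
rewrite big_split /= sumr_const mulr_natr lerD2l exchange_big /=.
apply: le_trans (_ : \sum_g G_pmf M g * (#|F| ^ (\rank Gb * n))%:R <= _).
  apply: ler_sum => g _; rewrite -big_distrr /=.
  by apply: ler_wpM2l; [exact: G_pmf_ge0 | exact: all_correct_align_le].
by rewrite -big_distrl /= sum_G_pmf mul1r.
Qed.

Lemma sum_err_prob_ge :
  1 - (#|F| ^ (\rank Gb * n))%:R / #|Msg m|%:R <= \sum_k err_prob M N k.
Proof.
under eq_bigr => k _ do rewrite err_prob_correct_mass.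
rewrite sumrB sumr_const card_ord -big_distrr /=.
have invD_gt0 : 0 < (#|Msg m|%:R)^-1 :> Rr.
  by rewrite invr_gt0 lt0r card_Msg_neq0 ler0n.
have := ler_wpM2l (ltW invD_gt0) sum_avg_correct_mass_le.
rewrite mulrDr mulrCA mulVf ?card_Msg_neq0 // mulr1 (mulrC _^-1); lra.
Qed.

End ConverseBound.

Lemma exists_fits_minrk (F : finFieldType) K B (M : 'M[bool]_(K, B)) :
  exists2 Gb : 'M[F]_(K, B), fits M Gb & (\rank Gb <= minrk F M)%N.
Proof.
apply: (big_ind (fun v => exists2 Gb : 'M[F]_(K, B), fits M Gb & (\rank Gb <= v)%N)).
- exists (\matrix_(i, j) (M i j)%:R); last exact: rank_leq_row.
  apply/forallP => i; apply/forallP => j; rewrite mxE.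
  by case: (M i j); rewrite ?oner_eq0 ?eqxx.
- move=> a b [G1 fits1 le1] [G2 fits2 le2].
  by rewrite /minn; case: ifP; [exists G1|exists G2].
- by move=> G fitsG; exists G.
Qed.

Lemma ln_prod (I : Type) (r : seq I) (f : I -> Rr) :
  (forall i, 0 < f i) -> ln (\prod_(i <- r) f i) = \sum_(i <- r) ln (f i).
Proof.
move=> f_gt0; elim: r => [|i r IHr]; first by rewrite !big_nil ln1.
by rewrite !big_cons lnM ?IHr // posrE // prodr_gt0.
Qed.

Lemma ln_le_of_ratio (D Q s : Rr) : 0 < D -> 0 < Q -> 0 <= s <= 1 / 2 ->
  1 - Q / D <= s -> ln D <= ln Q + 2 * s.
Proof.
move=> D_gt0 Q_gt0 /andP [s_ge0 s_le] ratio_le.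
have DQ_gt0 : 0 < D / Q by rewrite divr_gt0.
have half_le : 1 / 2 <= Q / D by lra.
have DQ_le2 : D / Q <= 2.
  by rewrite ler_pdivrMr //; rewrite ler_pdivlMr // in half_le; lra.
have DQ_sub1_le : D / Q - 1 <= 2 * s.
  have := ler_wpM2l (ltW DQ_gt0) ratio_le.
  rewrite mulrBr mulr1 mulrA divfK ?gt_eqF // divff ?gt_eqF //.
  by move=> h; apply: le_trans h _; apply: ler_wpM2r.
have ln_le : ln (D / Q) <= D / Q - 1.
  by rewrite -[in ln _](addrNK 1 (D / Q)) addrC le_ln1Dx //; lra.
by rewrite ln_div ?posrE // in ln_le; lra.
Qed.

Section RateBound.
Variables (F : finFieldType) (K B : nat) (M : 'M[bool]_(K, B)).

Lemma err_prob_ge0 n m (N : box F B n m) k : ns_box N -> 0 <= err_prob M N k.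
Proof.
move=> NS; do 4![apply: sumr_ge0 => ? _].
rewrite !mulr_ge0 ?G_pmf_ge0 ?ns_box_ge0 // invr_ge0.
by apply: prodr_ge0 => i _; rewrite ler0n.
Qed.

Lemma sum_ln_card_le n m (N : box F B n m) :
  ns_box N -> (forall k, 0 < m k)%N -> \sum_k err_prob M N k <= 1 / 2 ->
  \sum_k ln (m k)%:R <= (minrk F M * n)%:R * ln #|F|%:R + 2 * \sum_k err_prob M N k.
Proof.
move=> NS m_gt0 err_le.
have [Gb Gb_fits rank_le] := exists_fits_minrk F M.
have F_gt1 : 1 < #|F|%:R :> Rr by rewrite ltr1n card_finNzRing_gt1.
have ln_card_le : ln (#|Msg m|%:R) <=
    ln (#|F| ^ (\rank Gb * n))%:R + 2 * \sum_k err_prob M N k.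
  apply: ln_le_of_ratio; last exact: sum_err_prob_ge.
  - by rewrite lt0r card_Msg_neq0 ?ler0n.
  - by rewrite natrX exprn_gt0 //; lra.
  - by rewrite err_le sumr_ge0 // => k _; apply: err_prob_ge0.
rewrite card_Msg natr_prod ln_prod in ln_card_le; last by move=> k; rewrite ltr0n.
apply: le_trans ln_card_le _; rewrite lerD2r natrX lnXn; last lra.
rewrite -[ln _ *+ _]mulr_natl; apply: ler_wpM2r; first by rewrite ln_ge0 // ltW.
by rewrite ler_nat leq_mul2r rank_le orbT.
Qed.

Lemma sum_log2_rate_le n m (N : box F B n m) :
  ns_box N -> (0 < n)%N -> (forall k, 0 < m k)%N ->
  K%:R * \big[Num.max/0]_(k < K) err_prob M N k <= 1 / 2 ->
  \sum_k log2 (m k)%:R / n%:R <= (minrk F M)%:R * log2 #|F|%:R +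
    2 / ln 2 * (K%:R * \big[Num.max/0]_(k < K) err_prob M N k).
Proof.
set e := \big[Num.max/0]_(k < K) _ => NS n_gt0 m_gt0 Ke_le.
have sum_err_le : \sum_k err_prob M N k <= K%:R * e.
  apply: le_trans (ler_sum _ (fun k _ => le_bigmax 0 (err_prob M N) k)) _.
  by rewrite sumr_const card_ord mulr_natl.
have ln_sum_le := sum_ln_card_le NS m_gt0 (le_trans sum_err_le Ke_le).
have ln2_gt0 : 0 < ln 2 :> Rr by rewrite ln_gt0 //; lra.
have n_ge1 : 1 <= n%:R :> Rr by rewrite ler1n.
have e_ge0 : 0 <= e by apply: bigmax_ge_id.
have -> : \sum_k log2 (m k)%:R / n%:R = (\sum_k ln (m k)%:R) / (ln 2 * n%:R).
  by rewrite /log2 big_distrl /=; apply: eq_bigr => k _; rewrite invfM mulrA.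
rewrite ler_pdivrMr ?mulr_gt0 //; last by lra.
rewrite mulrDl (_ : _ * log2 _ * _ = (minrk F M * n)%:R * ln #|F|%:R); last first.
  by rewrite natrM /log2; field; rewrite gt_eqF.
rewrite (_ : 2 / ln 2 * _ * _ = 2 * (K%:R * e) * n%:R); last by field; rewrite gt_eqF.
have : 2 * (K%:R * e) <= 2 * (K%:R * e) * n%:R by rewrite ler_peMr // !mulr_ge0.
lra.
Qed.

End RateBound.

Local Open Scope classical_set_scope.

Lemma seq_limP (u : nat -> Rr) (L : Rr) : seq_lim u L <-> u @ \oo --> L.
Proof.
split=> [lim_u|lim_u e e_gt0].
  apply/(@cvgrPdist_lt _ Rr^o) => e /lim_u [N hN].
  by exists N => // i /hN; rewrite distrC.
have [N _ hN] := (@cvgrPdist_lt _ Rr^o _ _ _ _ _).1 lim_u e e_gt0.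
by exists N => i /hN; rewrite distrC.
Qed.

Lemma pp_limP (f : nat -> Rr) (L : Rr) :
  pp_lim f L <-> f @ within prime_power \oo --> L.
Proof.
split=> [lim_f|lim_f e e_gt0].
  apply/(@cvgrPdist_lt _ Rr^o) => e /lim_f [Q hQ].
  by exists Q => // q /hQ h /h; rewrite distrC.
have [Q _ hQ] := (@cvgrPdist_lt _ Rr^o _ _ _ _ _).1 lim_f e e_gt0.
by exists Q => q /hQ h /h; rewrite distrC.
Qed.

Lemma ns_achievable_sum_le (F : finFieldType) K B (M : 'M[bool]_(K, B)) r :
  ns_achievable F M r -> \sum_k r k <= (minrk F M)%:R * log2 #|F|%:R.
Proof.
case=> n [m [N [n_gt0 m_gt0 NS err_lim rates]]].
have [L rate_lim] := fin_all_exists rates.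
apply: le_trans (_ : \sum_k L k <= _).
  by apply: ler_sum => k _; case: (rate_lim k).
set e := fun i => \big[Num.max/0]_(k < K) err_prob M (N i) k.
set c := (minrk F M)%:R * log2 #|F|%:R.
have e_ge0 i : 0 <= e i by apply: bigmax_ge_id.
have small_err : \forall i \near \oo, K%:R * e i <= 1 / 2.
  have K1_gt0 : 0 < K%:R + 1 :> Rr by rewrite ltr_wpDl.
  have eps_gt0 : 0 < 1 / (2 * (K%:R + 1)) :> Rr by rewrite divr_gt0 ?mulr_gt0.
  have [i0 hi0] := err_lim _ eps_gt0.
  exists i0 => // i /hi0; rewrite -/(e i) subr0 ger0_norm // ltr_pdivlMr ?mulr_gt0 //.
  by have := e_ge0 i; nra.
have rate_cvg : (fun i => \sum_k log2 (m i k)%:R / (n i)%:R) @ \oo --> \sum_k L k.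
  apply: cvg_big => [|k _]; first exact: (@add_continuous Rr^o).
  by apply/seq_limP; case: (rate_lim k).
have bound_cvg : (fun i => c + 2 / ln 2 * (K%:R * e i)) @ \oo --> c.
  rewrite -[X in _ --> X]addr0 -(mulr0 (2 / ln 2)) -(mulr0 K%:R).
  apply: (@cvgD _ Rr^o); first exact: cvg_cst.
  by do 2![apply: cvgM; first exact: cvg_cst]; apply/seq_limP.
apply: (ler_cvg_to rate_cvg bound_cvg).
by apply: filterS small_err => i; apply: sum_log2_rate_le.
Qed.

Lemma tclosure_sum_le K (A : set ('I_K -> Rr)) (c : \bar Rr) :
  (forall r, A r -> ((\sum_k r k)%:E <= c)%E) ->
  forall r, tclosure A r -> ((\sum_k r k)%:E <= c)%E.
Proof.
move=> A_le r r_cl; apply/lee_addgt0Pr => e e_gt0.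
have K1_gt0 : 0 < K%:R + 1 :> Rr by rewrite ltr_wpDl.
have [r' [Ar' r_near]] := r_cl (e / (K%:R + 1)) (divr_gt0 e_gt0 K1_gt0).
apply: le_trans (leeD2r _ (A_le r' Ar')); rewrite -EFinD lee_fin.
have sum_le : \sum_k r k <= \sum_k (r' k + e / (K%:R + 1)).
  by apply: ler_sum => k _; have := r_near k; rewrite ltr_norml => /andP [_]; lra.
rewrite big_split sumr_const card_ord -[_ *+ K]mulr_natr /= in sum_le.
have : e / (K%:R + 1) * K%:R <= e.
  by rewrite mulrAC ler_pdivrMr // ler_wpM2l ?ltW //; lra.
lra.
Qed.

Lemma pp_liminf_ge (f g : nat -> Rr) (L : Rr) :
  pp_lim f L -> (forall q, prime_power q -> f q <= g q) -> (L%:E <= pp_liminf g)%E.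
Proof.
move=> f_lim f_le_g; apply/lee_addgt0Pr => e e_gt0.
have [Q f_near] := f_lim e e_gt0.
rewrite -[L](subrK e) EFinD; apply: leeD2r.
apply: le_trans (ereal_sup_ubound _); last by exists Q.
apply/ereal_infP => _ [q [Qq pp_q] <-]; rewrite lee_fin.
have := f_le_g q pp_q; have := f_near q Qq pp_q.
by rewrite ltr_norml => /andP [? _]; lra.
Qed.

Lemma log2_gt0 (q : nat) : (1 < q)%N -> 0 < log2 q%:R.
Proof. by move=> q_gt1; rewrite divr_gt0 ?ln_gt0 ?ltr1n //; lra. Qed.

Lemma prime_power_gt1 q : prime_power q -> (1 < q)%N.
Proof.
case=> p [k [p_prime [k_gt0 ->]]].
exact: leq_ltn_trans k_gt0 (ltn_expl _ (prime_gt1 p_prime)).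
Qed.

Lemma dof_achievable_sum_le K B (M : 'M[bool]_(K, B)) (Fq : nat -> finFieldType) d :
  (forall q, prime_power q -> #|Fq q| = q) -> dof_achievable Fq M d ->
  ((\sum_k d k)%:E <= pp_liminf (fun q => (minrk (Fq q) M)%:R))%E.
Proof.
move=> card_Fq [Rq [achievable dof_lim]].
have [L dof_lim_L] := fin_all_exists dof_lim.
apply: le_trans (_ : (\sum_k L k)%:E <= _)%E.
  by rewrite lee_fin; apply: ler_sum => k _; case: (dof_lim_L k).
apply: (@pp_liminf_ge (fun q => \sum_k Rq q k / log2 q%:R)).
  apply/pp_limP; apply: cvg_big => [|k _]; first exact: (@add_continuous Rr^o).
  by apply/pp_limP; case: (dof_lim_L k).
move=> q pp_q; rewrite -big_distrl /= ler_pdivrMr ?log2_gt0 ?prime_power_gt1 //.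
rewrite -[q in log2 q%:R](card_Fq q pp_q).
by apply: ns_achievable_sum_le; apply: achievable.
Qed.

Local Open Scope ereal_scope.

Lemma sum_capacity_NS_le (F : finFieldType) K B (M : 'M[bool]_(K, B)) :
  sum_capacity_NS F M <= ((minrk F M)%:R * log2 #|F|%:R)%:E.
Proof.
apply: ge_ereal_sup => _ [r r_cl <-]; apply: tclosure_sum_le r_cl => r'.
by rewrite lee_fin; apply: ns_achievable_sum_le.
Qed.

Lemma sum_dof_NS_le K B (M : 'M[bool]_(K, B)) (Fq : nat -> finFieldType) :
  (forall q, prime_power q -> #|Fq q| = q) ->
  sum_dof_NS Fq M <= pp_liminf (fun q => (minrk (Fq q) M)%:R).
Proof.
move=> card_Fq; apply: ge_ereal_sup => _ [d d_cl <-].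
by apply: tclosure_sum_le d_cl => d'; apply: dof_achievable_sum_le.
Qed.

Theorem theorem8 (K B : nat) (M : 'M[bool]_(K, B)) :
  (forall F : finFieldType,
     sum_capacity_NS F M * ((log2 (#|F|%:R))^-1)%:E <= ((minrk F M)%:R)%:E)
  /\
  (forall Fq : nat -> finFieldType,
     (forall q : nat, prime_power q -> #|Fq q| = q) ->
     sum_dof_NS Fq M <= pp_liminf (fun q => ((minrk (Fq q) M)%:R : Rdefinitions.R))).
Proof.
split=> [F|Fq card_Fq]; last exact: sum_dof_NS_le.
have log2_F_gt0 := log2_gt0 (card_finNzRing_gt1 F).
apply: le_trans (lee_wpmul2r _ (sum_capacity_NS_le F M)) _.
  by rewrite lee_fin invr_ge0 ltW.
by rewrite -EFinM lee_fin mulfK ?gt_eqF.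
Qed.
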